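(* Let $m$ be a given positive integer and let $f:C(\mathbb{R}^{n})\rightarrow\mathbb{R}$ be a distribution of the form $f = \sum_{k = 1}^{m}a_{k}\delta_{x_{k}}$, with $x_{i}\in\mathbb{R}^{n}$, $a_{i}\in\mathbb{R}\setminus\{0\}$, $1\leq i\leq m$, such that $x_{i}\neq x_{j}$ and $a_{i}\neq a_{j}$ whenever $i\neq j$. Assume that the spherical mean transform of $f$ is given at $\frac{1}{2}(n\cdot m(m - 1) + 2n + 2)$ points such that there is no hyperplane in $\mathbb{R}^{n}$ which contains more than $n$ of these given points. Then the points $x_{1},\dots,x_{m}$ and the amplitudes $a_{1},\dots,a_{m}$ can be uniquely recovered.
   Context: $C(\mathbb{R}^{n})$ denotes the continuous real functions on $\mathbb{R}^{n}$, $C(\mathbb{R}^{+})$ the continuous real functions on $\mathbb{R}^{+}=[0,\infty)$. For $x_{0}\in\mathbb{R}^{n}$, $\delta_{x_{0}}$ is the distribution $\delta_{x_{0}}(\phi)=\phi(x_{0})$ on $C(\mathbb{R}^{n})$. For a function $\phi\in C(\mathbb{R}^n)$ and a point $y\in\mathbb{R}^{n}$, the spherical mean transform (SMT) is $R_{y}\phi(t) = t^{n-1}\int_{|\theta|=1}\phi(y+t\theta)\,d\theta$, $t\geq 0$; its dual is $R_{y}^{\ast}\Lambda(z)=\Lambda(|y-z|)$ for $\Lambda\in C(\mathbb{R}^{+})$. For a distribution $T:C(\mathbb{R}^{n})\to\mathbb{R}$, the SMT of $T$ at $y$ is the map $R_{y}T:C(\mathbb{R}^{+})\to\mathbb{R}$,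 $(R_{y}T)(\Lambda)=T(\Lambda(|y-\cdot|))$. ''The SMT of $f$ is given at a point $y$'' means $R_{y}f$ is known. *)

From HB Require Import structures.
From mathcomp Require Import all_boot all_order all_algebra.
From mathcomp Require Import all_classical all_reals all_analysis.
Set Implicit Arguments. Unset Strict Implicit. Unset Printing Implicit Defensive.
Import Order.TTheory GRing.Theory Num.Theory.
Import numFieldNormedType.Exports.
Local Open Scope ring_scope.
Local Open Scope classical_set_scope.

Definition pt (R : realType) (n : nat) := 'I_n -> R.

Definition edist (R : realType) (n : nat) (y z : pt R n) : R :=
  Num.sqrt (\sum_(i < n) (y i - z i) ^+ 2).

(* Distributions acting on functions R^n -> R (only applied to continuous ones). *)
Definition distr_n (R : realType) (n : nat) := (pt R n -> R) -> R.

Definition delta_pt (R : realType) (n : nat) (x0 : pt R n) : distr_n R n :=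
  fun phi => phi x0.

Definition dirac_comb (R : realType) (n m : nat) (a : 'I_m -> R) (x : 'I_m -> pt R n)
  : distr_n R n := fun phi => \sum_(k < m) a k * delta_pt (x k) phi.

Definition SMT (R : realType) (n : nat) (y : pt R n) (T : distr_n R n) :
  (R -> R) -> R := fun Lam => T (fun z => Lam (edist y z)).

Definition SMT_eq_at (R : realType) (n : nat) (y : pt R n) (T T' : distr_n R n) : Prop :=
  forall Lam : R -> R, {within `[0%R, +oo[%classic, continuous (Lam : R -> R)} ->
    SMT y T Lam = SMT y T' Lam.

Definition in_hyperplane (R : realType) (n : nat) (c : pt R n) (d : R) (z : pt R n) : bool :=
  \sum_(i < n) c i * z i == d.

Definition no_hyperplane_more_than_n (R : realType) (n N : nat) (y : 'I_N -> pt R n) : Prop :=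
  forall (c : pt R n) (d : R), (exists i, c i != 0) ->
    (#|[set j : 'I_N | in_hyperplane c d (y j)]| <= n)%N.

Definition admissible (R : realType) (n m : nat) (a : 'I_m -> R) (x : 'I_m -> pt R n) : Prop :=
  injective x /\ injective a /\ (forall k, a k != 0).

(* At a point y where the distances |y - x_k| are pairwise distinct, testing
   R_y f = R_y g against a polynomial in the radius that vanishes at every
   radius but |y - x_k| shows that a_k is the total amplitude of g on the
   sphere of radius |y - x_k| around y.  So some z_l with b_l = a_k lies on that
   sphere, and as the b_l are distinct, l = g(k) does not depend on y.  A point
   y fails to separate the x_k only if it lies on one of the C(m,2) bisector
   hyperplanes of pairs of x's, each containing at most n of the given points;
   so at least n + 1 of them separate.  Then z_(g k) and x_k are equidistant
   from n + 1 given points, which cannot all lie on their bisector hyperplane,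
   hence z_(g k) = x_k. *)

From Pilot Require Import Defs.
From HB Require Import structures.
From mathcomp Require Import all_boot all_order all_algebra.
From mathcomp Require Import all_classical all_reals all_analysis.
From mathcomp Require Import ring zify.
From mathcomp Require Import perm.
Set Implicit Arguments. Unset Strict Implicit. Unset Printing Implicit Defensive.
Import Order.TTheory GRing.Theory Num.Theory.
Local Open Scope ring_scope.
Import numFieldNormedType.Exports.
(* mathcomp-analysis also defines an [edist]. *)
Local Notation edist := Pilot.Defs.edist.

Lemma leq_card_bigcup (I T : finType) (P : pred I) (F : I -> {set T}) :
  (#|\bigcup_(i | P i) F i| <= \sum_(i | P i) #|F i|)%N.
Proof.
elim/big_ind2 : _ => [|A1 k1 A2 k2 le1 le2|//]; first by rewrite cards0.
by rewrite (leq_trans (leq_card_setU _ _)) ?leq_add.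
Qed.

Lemma sum_ltn_pairs_const (m c : nat) :
  (\sum_(i < m) \sum_(j < m | (j < i)%N) c = c * 'C(m, 2))%N.
Proof.
transitivity (\sum_(i < m) c * i)%N.
  apply: eq_bigr => i _.
  by rewrite (big_ord_narrow (ltnW (ltn_ord i))) sum_nat_const card_ord mulnC.
by rewrite -big_distrr /= -bin2_sum big_mkord.
Qed.

Lemma mul2_bin2 (m : nat) : (2 * 'C(m, 2) = m * (m - 1))%N.
Proof. by elim: m => // m IH; rewrite binS bin1 mulnDr IH; nia. Qed.

Section Bisector.
Variables (R : realType) (n : nat).

Definition bisector (p q : pt R n) : pt R n -> bool :=
  in_hyperplane (fun i => 2 * (q i - p i)) (\sum_(i < n) (q i ^+ 2 - p i ^+ 2)).

Lemma edist_eq_bisector (y p q : pt R n) :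
  edist y p = edist y q -> bisector p q y.
Proof.
have sqr_sum_ge0 (u : pt R n) : 0 <= \sum_(i < n) u i ^+ 2.
  by apply: sumr_ge0 => i _; exact: sqr_ge0.
rewrite /edist => /eqP; rewrite eqr_sqrt ?sqr_sum_ge0 // => /eqP yp_yq.
rewrite /bisector /in_hyperplane -subr_eq0 -sumrB.
rewrite (eq_bigr (fun i => (y i - p i) ^+ 2 - (y i - q i) ^+ 2)) => [|i _].
  by rewrite sumrB yp_yq subrr.
by ring.
Qed.

Lemma card_bisector (N : nat) (y : 'I_N -> pt R n) (p q : pt R n) :
  no_hyperplane_more_than_n y -> p <> q ->
  (#|[set j | bisector p q (y j)]| <= n)%N.
Proof.
move=> hy neq_pq.
have normal_neq0 : exists i, 2 * (q i - p i) != 0.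
  apply/not_existsP => normal0; apply: neq_pq; apply/funext => i.
  by move/negP/negPn: (normal0 i); rewrite mulf_eq0 pnatr_eq0 /= subr_eq0 => /eqP ->.
apply: leq_trans (hy _ (\sum_(i < n) (q i ^+ 2 - p i ^+ 2)) normal_neq0).
by apply/eq_leq/eq_card => j; rewrite inE; apply/idP/idP; rewrite in_setE.
Qed.

Lemma equidistant_eq (N : nat) (y : 'I_N -> pt R n) (p q : pt R n) :
  no_hyperplane_more_than_n y ->
  (n < #|[set j | edist (y j) p == edist (y j) q]|)%N -> p = q.
Proof.
move=> hy many; apply: contrapT => neq_pq; move: many; rewrite ltnNge => /negP; apply.
apply: (leq_trans _ (card_bisector hy neq_pq)); apply/subset_leq_card/fintype.subsetP => j.
by rewrite !inE => /eqP /edist_eq_bisector.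
Qed.

Lemma card_edist_not_injective (N m : nat) (y : 'I_N -> pt R n)
    (x : 'I_m -> pt R n) :
  no_hyperplane_more_than_n y -> injective x ->
  (#|~: [set j | injectiveb (fun k => edist (y j) (x k))]| <= n * 'C(m, 2))%N.
Proof.
move=> hy x_inj.
pose Bad := \bigcup_(i < m) \bigcup_(i' < m | (i' < i)%N)
              [set j | bisector (x i) (x i') (y j)].
apply: (@leq_trans #|Bad|).
  apply/subset_leq_card/fintype.subsetP => j; apply: contraLR.
  rewrite !inE negbK => notBad; apply/injectiveP => i i' eq_dist.
  apply: contraNeq notBad => neq_ii'; apply/bigcupP.
  case: (ltngtP i i') => [lt|gt|eq_ii']; last by rewrite (val_inj eq_ii') eqxx in neq_ii'.
  - exists i' => //; apply/bigcupP; exists i => //.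
    by rewrite inE; apply: edist_eq_bisector.
  - exists i => //; apply/bigcupP; exists i' => //.
    by rewrite inE; apply: edist_eq_bisector.
rewrite -sum_ltn_pairs_const; apply: (leq_trans (leq_card_bigcup _ _)); apply: leq_sum => i _.
apply: (leq_trans (leq_card_bigcup _ _)); apply: leq_sum => i' lt_i'i.
by apply: card_bisector hy _ => /x_inj eq_ii'; rewrite eq_ii' ltnn in lt_i'i.
Qed.

End Bisector.

Section SphereMass.
Variables (R : realType) (n : nat).

Definition sphere_mass (m : nat) (a : 'I_m -> R) (x : 'I_m -> pt R n)
    (y : pt R n) (r : R) : R :=
  \sum_(k | edist y (x k) == r) a k.

Lemma SMT_dirac_comb_vanishing (m : nat) (a : 'I_m -> R) (x : 'I_m -> pt R n)
    (y : pt R n) (r : R) (Lam : R -> R) :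
  (forall k, edist y (x k) != r -> Lam (edist y (x k)) = 0) ->
  SMT y (dirac_comb a x) Lam = sphere_mass a x y r * Lam r.
Proof.
move=> Lam_vanish; rewrite /SMT /dirac_comb /delta_pt.
rewrite (bigID (fun k => edist y (x k) == r)) /= [X in _ + X]big1 ?addr0.
  by rewrite mulr_suml; apply: eq_bigr => k /eqP ->.
by move=> k /Lam_vanish ->; rewrite mulr0.
Qed.

Lemma SMT_eq_sphere_mass (m1 m2 : nat) (a : 'I_m1 -> R) (x : 'I_m1 -> pt R n)
    (b : 'I_m2 -> R) (z : 'I_m2 -> pt R n) (y : pt R n) (r : R) :
  SMT_eq_at y (dirac_comb a x) (dirac_comb b z) ->
  sphere_mass a x y r = sphere_mass b z y r.
Proof.
move=> hSMT.
pose radii := [seq edist y (x k) | k <- enum 'I_m1] ++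
              [seq edist y (z k) | k <- enum 'I_m2].
pose P := \prod_(s <- [seq s <- radii | s != r]) ('X - s%:P).
have P_vanish s : s != r -> s \in radii -> P.[s] = 0.
  by move=> neq_sr in_radii; apply/rootP; rewrite root_prod_XsubC mem_filter neq_sr.
have Pr_neq0 : P.[r] != 0 by rewrite -rootE root_prod_XsubC mem_filter eqxx.
have := hSMT (horner P) (continuous_subspaceT (@continuous_horner _ P)).
rewrite !(@SMT_dirac_comb_vanishing _ _ _ _ r) => [/(mulIf Pr_neq0)//|k|k] neq_kr;
  rewrite P_vanish // mem_cat; apply/orP; [right|left];
  by apply/mapP; exists k; rewrite ?mem_enum.
Qed.

Lemma SMT_eq_match (m : nat) (a b : 'I_m -> R) (x z : 'I_m -> pt R n)
    (y : pt R n) :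
  (forall k, a k != 0) -> injective (fun k => edist y (x k)) ->
  SMT_eq_at y (dirac_comb a x) (dirac_comb b z) ->
  exists g : 'I_m -> 'I_m,
    forall k, b (g k) = a k /\ edist y (z (g k)) = edist y (x k).
Proof.
move=> a_neq0 dist_inj hSMT.
have mass_x k : sphere_mass a x y (edist y (x k)) = a k.
  by rewrite /sphere_mass (big_pred1 k) // => l; apply/eqP/eqP => [/dist_inj|->].
have /fin_all_exists [g hg] k : exists l, edist y (z l) = edist y (x k).
  apply: contrapT => /forallNP no_l; move: (a_neq0 k).
  rewrite -mass_x (SMT_eq_sphere_mass _ hSMT) /sphere_mass big_pred0 ?eqxx //.
  by move=> l; apply/negbTE/eqP/no_l.
have g_inj : injective g by move=> k k' eq_g; apply: dist_inj; rewrite /= -!hg eq_g.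
exists g => k; split=> //.
rewrite -mass_x (SMT_eq_sphere_mass _ hSMT) /sphere_mass (big_pred1 (g k)) // => l /=.
by rewrite -(f_invF g_inj l) hg (inj_eq g_inj) (inj_eq dist_inj).
Qed.

End SphereMass.

Theorem theorem3p1 (R : realType) (n m : nat) (hm : (0 < m)%N)
  (y : 'I_((n * (m * (m - 1)) + 2 * n + 2) %/ 2) -> pt R n)
  (hy_inj : injective y) (hy : no_hyperplane_more_than_n y)
  (a b : 'I_m -> R) (x z : 'I_m -> pt R n)
  (hf : admissible a x) (hg : admissible b z)
  (hsmt : forall j, SMT_eq_at (y j) (dirac_comb a x) (dirac_comb b z)) :
  exists s : 'S_m, forall k, z k = x (s k) /\ b k = a (s k).
Proof.
case: hf => x_inj [_ a_neq0]; case: hg => _ [b_inj _].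
pose good := [set j | injectiveb (fun k => edist (y j) (x k))].
have card_good : (n < #|good|)%N.
  have N_eq : ((n * (m * (m - 1)) + 2 * n + 2) %/ 2 = n * 'C(m, 2) + n + 1)%N.
    by rewrite -mul2_bin2 mulnCA -mulnDr -[X in ((_ + X) %/ 2)%N]muln1 -mulnDr mulKn.
  have := card_edist_not_injective hy x_inj; rewrite -/good; have := cardsC good.
  rewrite card_ord; lia.
have /card_gt0P [j0] : (0 < #|good|)%N by apply: leq_ltn_trans card_good.
rewrite inE => /injectiveP /(SMT_eq_match a_neq0) /(_ (hsmt j0)) [g hg].
have z_g k : z (g k) = x k.
  apply: (equidistant_eq hy); apply: (leq_trans card_good).
  apply/subset_leq_card/fintype.subsetP => j; rewrite !inE => /injectiveP dist_inj.
  have [g' hg'] := SMT_eq_match a_neq0 dist_inj (hsmt j).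
  have <- : g' k = g k by apply: b_inj; rewrite (hg' k).1 (hg k).1.
  by rewrite (hg' k).2.
have g_inj : injective g by move=> k k' eq_g; apply: x_inj; rewrite -!z_g eq_g.
exists (perm g_inj)^-1%g => k.
have gsk : g ((perm g_inj)^-1%g k) = k by rewrite -[RHS](permKV (perm g_inj)) permE.
by split; rewrite -{1}gsk ?z_g ?(hg _).1.
Qed.
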